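(* Let $\mathcal{P}=(\mathcal{P},m,\Delta,\delta)$ be a double twisted bialgebra and $\mathcal{Q}$ a species. The formula $\phi\leftarrow f=(\phi\otimes f)\circ\delta$ (i.e. $(\phi\leftarrow f)[A](x)=\sum f[A](x'')\phi[A](x')$ where $\delta_A(x)=\sum x'\otimes x''$) defines a right action of the monoid $M_{\mathcal{P}}=(\mathrm{Char}(\mathcal{P}),\star)$ on the set $\mathrm{Mor}(\mathcal{P},\mathcal{Q})$ of species morphisms $\mathcal{P}\to\mathcal{Q}$; in particular $(\phi\leftarrow f)\leftarrow g=\phi\leftarrow(f\star g)$. Moreover: (1) if $\mathcal{Q}$ is a twisted algebra, the set $\mathrm{Mor}_A(\mathcal{P},\mathcal{Q})$ of twisted algebra morphisms is stable under this action; (2) if $\mathcal{Q}$ is a twisted coalgebra, the set $\mathrm{Mor}_C(\mathcal{P},\mathcal{Q})$ of twisted coalgebra morphisms is stable under this action; (3) if $\mathcal{Q}$ is a twisted bialgebra, the set $\mathrm{Mor}_B(\mathcal{P},\mathcal{Q})$ of twisted bialgebra morphisms is stable under this action.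
   Context: Work over a field $\mathbb{K}$. Species, twisted algebras (natural associative $m_{A,B}:\mathcal{P}[A]\otimes\mathcal{P}[B]\to\mathcal{P}[A\sqcup B]$ with unit $1_{\mathcal{P}}$), twisted coalgebras (natural coassociative $\Delta_{A,B}:\mathcal{P}[A\sqcup B]\to\mathcal{P}[A]\otimes\mathcal{P}[B]$ with counit $\varepsilon$) and twisted bialgebras are taken in the category of species with the Cauchy product; morphisms are natural families of linear maps compatible with the structures. A double twisted bialgebra is $(\mathcal{P},m,\Delta,\delta)$ with: (i) $(\mathcal{P},m,\Delta)$ a twisted bialgebra with counit $\varepsilon$; (ii) for each finite set $A$ a coassociative coproduct $\delta_A:\mathcal{P}[A]\to\mathcal{P}[A]\otimes\mathcal{P}[A]$ with counit $\varepsilon'_A$, natural in bijections; (iii) $\delta$ multiplicative ($\delta(xy)=\sum x'y'\otimes x''y''$, $\delta_\emptyset(1)=1\otimes1$); (iv) $(\Delta_{A,B}\otimes Id)\circ\delta_{A\sqcup B}=m_{1,3,24}\circ(\delta_A\otimes\delta_B)\circ\Delta_{A,B}$ with $m_{1,3,24}(x\otimes y\otimes z\otimes t)=x\otimes z\otimes m_{A,B}(y\otimes t)$; (v) $(\varepsilon\otimes Id)\delta_\emptyset(x)=\varepsilon(x)1_{\mathcal{P}}$ for $x\in\mathcal{P}[\emptyset]$. $\mathrm{Char}(\mathcal{P})$ is the set of characters: natural families of linear forms $f[A]:\mathcal{P}[A]\to\mathbb{K}$ with $f(xy)=f(x)f(y)$ and $f(1_{\mathcal{P}})=1$. The product $\star$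 is $(f\star g)(x)=\sum f(x')g(x'')$ where $\delta_A(x)=\sum x'\otimes x''$; $(\mathrm{Char}(\mathcal{P}),\star)$ is a monoid with unit $\varepsilon'$. *)

(* Conventions:
   - finite sets = finTypes; disjoint union A ⊔ B = sum type (A + B); ∅ = void;
   - a species is a family P[A] of K-vector spaces (lmodType K) with a relabelling
     map for every function A -> B, subject to the functor laws for bijections only
     (values on non-bijective maps are irrelevant junk);
   - an element of U ⊗ V is represented by a finite formal sum (seq (U * V));
     two formal sums are equal in U ⊗ V iff every bilinear map out of U × V
     (into any K-vector space) takes the same summed value on them (universal
     property of the tensor product).  Same for triple tensors. *)
From HB Require Import structures.
From mathcomp Require Import all_boot all_algebra.
Set Implicit Arguments. Unset Strict Implicit. Unset Printing Implicit Defensive.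
Import GRing.Theory.
Local Open Scope ring_scope.

Section TwistedBialgebras.
Variable K : fieldType.

Definition bilin (U V W : lmodType K) (b : U -> V -> W) : Prop :=
  (forall v, linear (fun u => b u v)) /\ (forall u, linear (b u)).

Definition trilin (U V W X : lmodType K) (b : U -> V -> W -> X) : Prop :=
  [/\ forall v w, linear (fun u => b u v w),
      forall u w, linear (fun v => b u v w) &
      forall u v, linear (b u v)].

Definition teq (U V : lmodType K) (t1 t2 : seq (U * V)) : Prop :=
  forall (W : lmodType K) (b : U -> V -> W), bilin b ->
    \sum_(p <- t1) b p.1 p.2 = \sum_(p <- t2) b p.1 p.2.

Definition teq3 (U V W : lmodType K) (t1 t2 : seq (U * V * W)) : Prop :=
  forall (X : lmodType K) (b : U -> V -> W -> X), trilin b ->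
    \sum_(p <- t1) b p.1.1 p.1.2 p.2 = \sum_(p <- t2) b p.1.1 p.1.2 p.2.

Definition tscale (U V : lmodType K) (a : K) (t : seq (U * V)) : seq (U * V) :=
  [seq (a *: p.1, p.2) | p <- t].

Definition sumf (A A' B B' : Type) (s : A -> A') (t : B -> B') : A + B -> A' + B' :=
  fun z => match z with inl a => inl (s a) | inr b => inr (t b) end.

Definition sum_assoc (A B C : Type) : (A + B) + C -> A + (B + C) :=
  fun z => match z with
           | inl (inl a) => inl a
           | inl (inr b) => inr (inl b)
           | inr c => inr (inr c) end.

Definition sum_mid (A1 A2 B1 B2 : Type) : (A1 + A2) + (B1 + B2) -> (A1 + B1) + (A2 + B2) :=
  fun z => match z with
           | inl (inl a1) => inl (inl a1)
           | inl (inr a2) => inr (inl a2)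
           | inr (inl b1) => inl (inr b1)
           | inr (inr b2) => inr (inr b2) end.

Definition sum_void_l (A : Type) : void + A -> A :=
  fun z => match z with inl v => match v with end | inr a => a end.

Definition sum_void_r (A : Type) : A + void -> A :=
  fun z => match z with inl a => a | inr v => match v with end end.

Record species := Species {
  sp_obj :> finType -> lmodType K;
  relab : forall A B : finType, (A -> B) -> sp_obj A -> sp_obj B;
  relab_linear : forall (A B : finType) (s : A -> B), bijective s -> linear (relab s);
  relab_id : forall (A : finType) (x : sp_obj A), relab (@id A) x = x;
  relab_comp : forall (A B C : finType) (s : A -> B) (t : B -> C),
      bijective s -> bijective t -> forall x, relab (t \o s) x = relab t (relab s x)
}.

Record twisted_algebra (P : species) := TwAlg {
  tmul : forall A B : finType, P A -> P B -> P (A + B)%type;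
  tone : P void;
  tmul_bilin : forall A B : finType, bilin (@tmul A B);
  tmul_natural : forall (A A' B B' : finType) (s : A -> A') (t : B -> B'),
      bijective s -> bijective t -> forall (x : P A) (y : P B),
      tmul (relab s x) (relab t y) = relab (sumf s t) (tmul x y);
  tmul_assoc : forall (A B C : finType) (x : P A) (y : P B) (z : P C),
      tmul x (tmul y z) = relab (@sum_assoc A B C) (tmul (tmul x y) z);
  tmul_1l : forall (A : finType) (x : P A), relab (@sum_void_l A) (tmul tone x) = x;
  tmul_1r : forall (A : finType) (x : P A), relab (@sum_void_r A) (tmul x tone) = x
}.

Record twisted_coalgebra (P : species) := TwCoalg {
  tcop : forall A B : finType, P (A + B)%type -> seq (P A * P B);
  tcounit : P void -> K;
  tcop_linear : forall (A B : finType) (a : K) (x y : P (A + B)%type),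
      teq (tcop (a *: x + y)) (tscale a (tcop x) ++ tcop y);
  tcop_natural : forall (A A' B B' : finType) (s : A -> A') (t : B -> B'),
      bijective s -> bijective t -> forall x : P (A + B)%type,
      teq (tcop (relab (sumf s t) x)) [seq (relab s p.1, relab t p.2) | p <- tcop x];
  tcop_coassoc : forall (A B C : finType) (x : P ((A + B) + C)%type),
      teq3 (flatten [seq [seq (q.1, q.2, p.2) | q <- tcop p.1] | p <- tcop x])
           (flatten [seq [seq (p.1, q.1, q.2) | q <- tcop p.2]
                        | p <- tcop (relab (@sum_assoc A B C) x)]);
  tcounit_linear : scalar tcounit;
  tcounit_l : forall (A : finType) (x : P A),
      \sum_(p <- tcop (relab (@inr void A) x)) tcounit p.1 *: p.2 = x;
  tcounit_r : forall (A : finType) (x : P A),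
      \sum_(p <- tcop (relab (@inl A void) x)) tcounit p.2 *: p.1 = x
}.

Record twisted_bialgebra (P : species) := TwBialg {
  tb_alg :> twisted_algebra P;
  tb_coalg : twisted_coalgebra P;
  tb_cop_mul : forall (A1 A2 B1 B2 : finType) (x : P (A1 + A2)%type) (y : P (B1 + B2)%type),
      teq (tcop tb_coalg (relab (@sum_mid A1 A2 B1 B2) (tmul tb_alg x y)))
          [seq (tmul tb_alg p.1 q.1, tmul tb_alg p.2 q.2)
             | p <- tcop tb_coalg x, q <- tcop tb_coalg y];
  tb_cop_one : teq (tcop tb_coalg (relab (@inl void void) (tone tb_alg)))
                   [:: (tone tb_alg, tone tb_alg)];
  tb_counit_mul : forall x y : P void,
      tcounit tb_coalg (relab (@sum_void_l void) (tmul tb_alg x y))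
      = tcounit tb_coalg x * tcounit tb_coalg y;
  tb_counit_one : tcounit tb_coalg (tone tb_alg) = 1
}.

Record double_twisted_bialgebra (P : species) := DTB {
  dtb_bialg :> twisted_bialgebra P;
  dcop : forall A : finType, P A -> seq (P A * P A);
  dcounit : forall A : finType, P A -> K;
  dcop_linear : forall (A : finType) (a : K) (x y : P A),
      teq (dcop (a *: x + y)) (tscale a (dcop x) ++ dcop y);
  dcop_natural : forall (A B : finType) (s : A -> B), bijective s -> forall x : P A,
      teq (dcop (relab s x)) [seq (relab s p.1, relab s p.2) | p <- dcop x];
  dcop_coassoc : forall (A : finType) (x : P A),
      teq3 (flatten [seq [seq (q.1, q.2, p.2) | q <- dcop p.1] | p <- dcop x])
           (flatten [seq [seq (p.1, q.1, q.2) | q <- dcop p.2] | p <- dcop x]);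
  dcounit_linear : forall A : finType, scalar (@dcounit A);
  dcounit_l : forall (A : finType) (x : P A), \sum_(p <- dcop x) dcounit p.1 *: p.2 = x;
  dcounit_r : forall (A : finType) (x : P A), \sum_(p <- dcop x) dcounit p.2 *: p.1 = x;
  dcop_mul : forall (A B : finType) (x : P A) (y : P B),
      teq (dcop (tmul dtb_bialg x y))
          [seq (tmul dtb_bialg p.1 q.1, tmul dtb_bialg p.2 q.2) | p <- dcop x, q <- dcop y];
  dcop_one : teq (dcop (tone dtb_bialg)) [:: (tone dtb_bialg, tone dtb_bialg)];
  dcop_cop : forall (A B : finType) (x : P (A + B)%type),
      teq3 (flatten [seq [seq (q.1, q.2, p.2) | q <- tcop (tb_coalg dtb_bialg) p.1]
                       | p <- dcop x])
           (flatten [seq [seq (q.1, r.1, tmul dtb_bialg q.2 r.2) | q <- dcop p.1, r <- dcop p.2]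
                       | p <- tcop (tb_coalg dtb_bialg) x]);
  dcounit_eps : forall x : P void,
      \sum_(p <- dcop x) tcounit (tb_coalg dtb_bialg) p.1 *: p.2
      = tcounit (tb_coalg dtb_bialg) x *: tone dtb_bialg
}.

Definition is_char (P : species) (M : twisted_algebra P) (f : forall A : finType, P A -> K) :=
  [/\ forall A : finType, scalar (f A),
      forall (A B : finType) (s : A -> B), bijective s -> forall x : P A, f B (relab s x) = f A x,
      forall (A B : finType) (x : P A) (y : P B), f _ (tmul M x y) = f A x * f B y &
      f void (tone M) = 1].

Definition star (P : species) (D : double_twisted_bialgebra P)
    (f g : forall A : finType, P A -> K) : forall A : finType, P A -> K :=
  fun A x => \sum_(p <- dcop D x) f A p.1 * g A p.2.

Definition is_mor (P Q : species) (phi : forall A : finType, P A -> Q A) :=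
  (forall A : finType, linear (phi A)) /\
  (forall (A B : finType) (s : A -> B), bijective s -> forall x : P A,
      phi B (relab s x) = relab s (phi A x)).

Definition is_alg_mor (P Q : species) (MP : twisted_algebra P) (MQ : twisted_algebra Q)
    (phi : forall A : finType, P A -> Q A) :=
  [/\ is_mor phi,
      forall (A B : finType) (x : P A) (y : P B), phi _ (tmul MP x y) = tmul MQ (phi A x) (phi B y) &
      phi void (tone MP) = tone MQ].

Definition is_coalg_mor (P Q : species) (CP : twisted_coalgebra P) (CQ : twisted_coalgebra Q)
    (phi : forall A : finType, P A -> Q A) :=
  [/\ is_mor phi,
      forall (A B : finType) (x : P (A + B)%type),
        teq (tcop CQ (phi _ x)) [seq (phi A p.1, phi B p.2) | p <- tcop CP x] &
      forall x : P void, tcounit CQ (phi void x) = tcounit CP x].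

Definition is_bialg_mor (P Q : species) (BP : twisted_bialgebra P) (BQ : twisted_bialgebra Q)
    (phi : forall A : finType, P A -> Q A) :=
  is_alg_mor BP BQ phi /\ is_coalg_mor (tb_coalg BP) (tb_coalg BQ) phi.

Definition act (P Q : species) (D : double_twisted_bialgebra P)
    (phi : forall A : finType, P A -> Q A) (f : forall A : finType, P A -> K) :
    forall A : finType, P A -> Q A :=
  fun A x => \sum_(p <- dcop D x) f A p.2 *: phi A p.1.

End TwistedBialgebras.

From mathcomp Require Import all_boot all_algebra.
Import GRing.Theory.
Local Open Scope ring_scope.
Set Implicit Arguments. Unset Strict Implicit. Unset Printing Implicit Defensive.

(* Each claim is the image of an identity satisfied by delta under a suitable
   multilinear map: coassociativity gives the action law, the counit property
   gives the trivial action of eps', multiplicativity of delta together with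
   f(xy) = f(x) f(y) gives (1), and the compatibility (iv) of delta with Delta,
   with (v) for the counits, gives (2).  Since tensors are formal sums compared
   through all multilinear maps, each step is just the choice of that map. *)

Section LinearFor.
Variables (R : pzRingType) (U : lmodType R) (V : zmodType) (s : GRing.Scale.law R V).
Variables (f : U -> V) (fL : linear_for s f).

Lemma linear_forD : {morph f : u v / u + v}.
Proof. exact: (GRing.semilinear_linear fL).2. Qed.

Lemma linear_for0 : f 0 = 0.
Proof. by have := zmod_morphism_linear fL 0 0; rewrite !subrr. Qed.

Lemma linear_forZ a u : f (a *: u) = s a (f u).
Proof. exact: (scalable_linear fL). Qed.

Lemma linear_for_sum I (r : seq I) (F : I -> U) :
  f (\sum_(i <- r) F i) = \sum_(i <- r) f (F i).
Proof. exact: (big_morph f linear_forD linear_for0). Qed.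

End LinearFor.

Section Bilinear.
Variable K : fieldType.

Section BilinearMap.
Variables (U V W : lmodType K) (b : U -> V -> W) (bL : bilin b).

Lemma bilinZl a u v : b (a *: u) v = a *: b u v.
Proof. exact: (linear_forZ (bL.1 v)). Qed.

Lemma bilin_suml I (r : seq I) (F : I -> U) v :
  b (\sum_(i <- r) F i) v = \sum_(i <- r) b (F i) v.
Proof. exact: (linear_for_sum (bL.1 v)). Qed.

Lemma bilin_sumZ I J (r : seq I) (s : seq J) (a : I -> K) (c : J -> K)
    (F : I -> U) (G : J -> V) :
  b (\sum_(i <- r) a i *: F i) (\sum_(j <- s) c j *: G j)
  = \sum_(i <- r) \sum_(j <- s) (a i * c j) *: b (F i) (G j).
Proof.
rewrite bilin_suml; apply: eq_bigr => i _.
rewrite bilinZl (linear_for_sum (bL.2 _)) scaler_sumr; apply: eq_bigr => j _.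
by rewrite (linear_forZ (bL.2 _)) scalerA.
Qed.

Lemma tscale_sum a (t : seq (U * V)) :
  \sum_(p <- tscale a t) b p.1 p.2 = a *: \sum_(p <- t) b p.1 p.2.
Proof. by rewrite big_map scaler_sumr; apply: eq_bigr => p _; rewrite bilinZl. Qed.

Lemma bilin_comp (U' V' : lmodType K) (g : U' -> U) (h : V' -> V) :
  linear g -> linear h -> bilin (fun u v => b (g u) (h v)).
Proof.
move=> gL hL; split=> [v a u1 u2 | u a v1 v2] /=.
  by rewrite gL; apply: bL.1.
by rewrite hL; apply: bL.2.
Qed.

Lemma scale_trilin (X : lmodType K) (h : X -> K) :
  scalar h -> trilin (fun u v w => h w *: b u v).
Proof.
move=> hL; split=> [v w a u1 u2 | u w a v1 v2 | u v a w1 w2] /=.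
- by rewrite bL.1 scalerDr !scalerA mulrC.
- by rewrite bL.2 scalerDr !scalerA mulrC.
- by rewrite hL scalerDl scalerA.
Qed.

End BilinearMap.

Lemma scale_bilin (U V : lmodType K) (g : U -> V) (h : U -> K) :
  linear g -> scalar h -> bilin (fun u v => h v *: g u).
Proof.
move=> gL hL; split=> [v a u1 u2 | u a v1 v2] /=.
  by rewrite gL scalerDr !scalerA mulrC.
by rewrite hL scalerDl scalerA.
Qed.

Lemma cop_sum_linear (U V1 V2 W : lmodType K) (cop : U -> seq (V1 * V2))
    (b : V1 -> V2 -> W) :
  (forall a x y, teq (cop (a *: x + y)) (tscale a (cop x) ++ cop y)) -> bilin b ->
  linear (fun z => \sum_(p <- cop z) b p.1 p.2).
Proof. by move=> copL bL a x y; rewrite (copL a x y _ _ bL) big_cat tscale_sum. Qed.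

End Bilinear.

Section RightAction.
Variables (K : fieldType) (P : species K) (D : double_twisted_bialgebra P) (Q : species K).
Variables (phi : forall A : finType, P A -> Q A) (f : forall A : finType, P A -> K).

Lemma act_is_mor : is_mor phi -> is_char D f -> is_mor (act D phi f).
Proof.
move=> [phiL phiN] [fL fN _ _]; split=> [A | A B s sB x].
  exact: cop_sum_linear (@dcop_linear _ _ D A) (scale_bilin (phiL A) (fL A)).
rewrite /act (dcop_natural D sB x (scale_bilin (phiL B) (fL B))) big_map.
rewrite (linear_for_sum (relab_linear sB)); apply: eq_bigr => p _ /=.
by rewrite fN // phiN // (linear_forZ (relab_linear sB)).
Qed.

Lemma act_dcounit (A : finType) (x : P A) :
  linear (@phi A) -> act D phi (@dcounit _ _ D) x = @phi A x.
Proof.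
move=> phiL; rewrite -{2}(dcounit_r D x) (linear_for_sum phiL).
by apply: eq_bigr => p _; rewrite (linear_forZ phiL).
Qed.

(* Coassociativity of delta, read through u ⊗ v ⊗ w |-> g(w) f(v) phi(u). *)
Lemma act_star (g : forall A : finType, P A -> K) (A : finType) (x : P A) :
  linear (@phi A) -> scalar (@f A) -> scalar (g A) ->
  act D (act D phi f) g x = act D phi (star D f g) x.
Proof.
move=> phiL fL gL; rewrite /act /star.
have TL := scale_trilin (scale_bilin phiL fL) gL.
transitivity (\sum_(p <- flatten [seq [seq (q.1, q.2, p.2) | q <- dcop D p.1] | p <- dcop D x])
                g A p.2 *: (f p.1.2 *: phi p.1.1)).
  by rewrite big_flatten big_map; apply: eq_bigr => p _; rewrite big_map scaler_sumr.
rewrite (dcop_coassoc D x TL) big_flatten big_map; apply: eq_bigr => p _.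
by rewrite big_map scaler_suml; apply: eq_bigr => q _; rewrite scalerA mulrC.
Qed.

Lemma act_alg_mor (MQ : twisted_algebra Q) :
  is_alg_mor D MQ phi -> is_char D f -> is_alg_mor D MQ (act D phi f).
Proof.
move=> [phiM phi_mul phi_one] fC; split; first exact: act_is_mor.
  move: phiM fC => [phiL _] [fL _ f_mul _] A B x y.
  rewrite /act (dcop_mul D x y (scale_bilin (phiL _) (fL _))) big_allpairs_dep.
  rewrite (bilin_sumZ (tmul_bilin MQ A B)); apply: eq_bigr => p _.
  by apply: eq_bigr => q _ /=; rewrite f_mul phi_mul.
move: phiM fC => [phiL _] [fL _ _ f_one].
rewrite /act (dcop_one D (scale_bilin (phiL _) (fL _))) big_seq1 /=.
by rewrite f_one scale1r phi_one.
Qed.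

Lemma act_coalg_mor (CQ : twisted_coalgebra Q) :
  is_coalg_mor (tb_coalg D) CQ phi -> is_char D f ->
  is_coalg_mor (tb_coalg D) CQ (act D phi f).
Proof.
move=> [phiM phi_cop phi_eps] fC; split; first exact: act_is_mor.
  move: phiM fC => [phiL _] [fL _ f_mul _] A B x W b bL.
  have TL := scale_trilin (bilin_comp bL (phiL A) (phiL B)) (fL (A + B)%type).
  have copL := cop_sum_linear (@tcop_linear _ _ CQ A B) bL.
  rewrite /act (linear_for_sum copL) big_map.
  transitivity (\sum_(p <- flatten [seq [seq (q.1, q.2, p.2) | q <- tcop (tb_coalg D) p.1]
                                    | p <- dcop D x])
                  f p.2 *: b (phi p.1.1) (phi p.1.2)).
    rewrite big_flatten big_map; apply: eq_bigr => p _.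
    by rewrite (linear_forZ copL) /= (phi_cop A B p.1 _ _ bL) !big_map scaler_sumr.
  rewrite (dcop_cop D x TL) big_flatten big_map; apply: eq_bigr => p _.
  rewrite big_allpairs_dep (bilin_sumZ bL); apply: eq_bigr => q _.
  by apply: eq_bigr => r _; rewrite f_mul.
move: phiM fC => [phiL _] [fL _ _ f_one] x.
have epsL := tcounit_linear CQ.
rewrite /act (linear_for_sum epsL) -[RHS]mulr1 -f_one -(linear_forZ (fL void)).
rewrite -(dcounit_eps D x) (linear_for_sum (fL void)); apply: eq_bigr => p _.
by rewrite (linear_forZ epsL) phi_eps (linear_forZ (fL void)); apply: mulrC.
Qed.

Lemma act_bialg_mor (BQ : twisted_bialgebra Q) :
  is_bialg_mor D BQ phi -> is_char D f -> is_bialg_mor D BQ (act D phi f).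
Proof. by move=> [phiA phiC] fC; split; [apply: act_alg_mor | apply: act_coalg_mor]. Qed.

End RightAction.

Theorem proposition26 (K : fieldType) (P : species K) (D : double_twisted_bialgebra P)
    (Q : species K) :
  (* phi <- f is again a morphism of species *)
  (forall (phi : forall A : finType, P A -> Q A) (f : forall A : finType, P A -> K),
      is_mor phi -> is_char D f -> is_mor (act D phi f))
  (* the unit eps' of the monoid acts trivially *)
  /\ (forall phi : forall A : finType, P A -> Q A,
      is_mor phi -> forall (A : finType) (x : P A), act D phi (@dcounit _ _ D) x = phi A x)
  (* (phi <- f) <- g = phi <- (f * g) *)
  /\ (forall (phi : forall A : finType, P A -> Q A) (f g : forall A : finType, P A -> K),
      is_mor phi -> is_char D f -> is_char D g ->
      forall (A : finType) (x : P A), act D (act D phi f) g x = act D phi (star D f g) x)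
  (* (1) *)
  /\ (forall (MQ : twisted_algebra Q) (phi : forall A : finType, P A -> Q A)
             (f : forall A : finType, P A -> K),
      is_alg_mor D MQ phi -> is_char D f -> is_alg_mor D MQ (act D phi f))
  (* (2) *)
  /\ (forall (CQ : twisted_coalgebra Q) (phi : forall A : finType, P A -> Q A)
             (f : forall A : finType, P A -> K),
      is_coalg_mor (tb_coalg D) CQ phi -> is_char D f -> is_coalg_mor (tb_coalg D) CQ (act D phi f))
  (* (3) *)
  /\ (forall (BQ : twisted_bialgebra Q) (phi : forall A : finType, P A -> Q A)
             (f : forall A : finType, P A -> K),
      is_bialg_mor D BQ phi -> is_char D f -> is_bialg_mor D BQ (act D phi f)).
Proof.
split; first exact: act_is_mor.
split; first by move=> phi [phiL _] A x; apply: act_dcounit.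
split; first by move=> phi f g [phiL _] [fL _ _ _] [gL _ _ _] A x; apply: act_star.
split; first by move=> MQ phi f; apply: act_alg_mor.
split; first by move=> CQ phi f; apply: act_coalg_mor.
by move=> BQ phi f; apply: act_bialg_mor.
Qed.
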